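(* Assume Assumption 1 (stated in the context). Let $\theta^0$, $D^3_\theta$ and $\epsilon_9>0$ be as in the context. Then there is a positive constant $\epsilon_{12}$ such that for every triple $(i,j,k)$ and every $t\in[0,T]$ one of the following holds: $$\text{dist}(b_{ij}(t,\theta^0),o_k)-d_0>\epsilon_{12},$$ or $$\text{dist}(b_{ij}(t,\theta^0),o_k)-d_0\le\epsilon_{12}\ \text{ and }\ \langle D^3_\theta,\nabla_\theta\text{dist}(b_{ij}(t,\theta^0),o_k)\rangle\ge\frac{\epsilon_9}{2}.$$
   Context: For a finite-dimensional parameter vector $\theta$ and $t\in[0,T]$, robot pieces $b_{ij}(t,\theta)\subset\mathbb{R}^3$ and obstacle pieces $o_k\subset\mathbb{R}^3$ are given; $\text{dist}$ is the shortest Euclidean distance between sets; $d_0\ge0$; $\mathcal{O}(\theta)$ is a differentiable cost. Assumption 1: the index set of triples $(i,j,k)$ is finite and each $(t,\theta)\mapsto\text{dist}(b_{ij}(t,\theta),o_k)$ is sufficiently smooth. $\theta^0$ is a parameter vector, and $D^3_\theta$ is a direction with positive constants $\epsilon_8,\epsilon_9$ such that $\langle D^3_\theta,\nabla_\theta\mathcal{O}(\theta^0)\rangle<-\epsilon_8$ and $\langle D^3_\theta,\nabla_\theta\text{dist}(b_{ij}(t,\theta^0),o_k)\rangle>\epsilon_9$ for all $(i,j,k,t)$ with $\text{dist}(b_{ij}(t,\theta^0),o_k)=d_0$. (Such a direction exists when the generalized Mangasarian–Fromovitz constraint qualification holds at $\theta^0$ and the first-order optimality condition fails there.) *)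

From HB Require Import structures.
From mathcomp Require Import all_boot all_order all_algebra.
From mathcomp Require Import all_classical all_reals all_analysis.
Set Implicit Arguments. Unset Strict Implicit. Unset Printing Implicit Defensive.
Import Order.TTheory GRing.Theory Num.Theory.
Import numFieldNormedType.Exports.
Local Open Scope classical_set_scope.
Local Open Scope ring_scope.

Definition dotr (R : realType) (m : nat) (u v : 'rV[R]_m) : R :=
  \sum_(l < m) u 0 l * v 0 l.

Definition enorm (R : realType) (m : nat) (u : 'rV[R]_m) : R :=
  Num.sqrt (dotr u u).

Definition setdist (R : realType) (A B : set 'rV[R]_3) : R :=
  inf [set enorm (x - y) | x in A & y in B].

Definition grad (R : realType) (n : nat) (f : 'rV[R]_n -> R) (x : 'rV[R]_n)
  : 'rV[R]_n :=
  \row_(l < n) ('d f x (delta_mx 0 l : 'rV[R]_n)).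

(* "Sufficiently smooth" (at least C^1) for a function of (t, theta):
   differentiable everywhere with continuous differential (all directional
   derivatives continuous in the base point). *)
Definition C1 (R : realType) (n : nat) (g : R * 'rV[R]_n -> R) : Prop :=
  (forall p, differentiable g p) /\
  (forall v : R * 'rV[R]_n, continuous (fun p => 'd g p v)).

From HB Require Import structures.
From mathcomp Require Import all_boot all_order all_algebra.
From mathcomp Require Import all_classical all_reals all_analysis.
From mathcomp Require Import lra.
Import Order.TTheory GRing.Theory Num.Theory.
Import numFieldNormedType.Exports.
Local Open Scope classical_set_scope.
Local Open Scope ring_scope.

(* For each triple (i, j, k), at every time of [0, T] either the distance
   exceeds d0 or it equals d0 and then the directional derivative along D
   exceeds eps9; so the maximum of (dist - d0) and (derivative - eps9 / 2)
   is positive on [0, T].  Both are continuous in t by Assumption 1, hence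
   this maximum has a positive minimum on the compact interval, and half of
   it is a margin for that triple.  The minimum over the finitely many
   triples is the required eps12. *)

Lemma continuous_pair_l {U V : topologicalType} (y : V) :
  continuous (fun x : U => (x, y)).
Proof. by move=> x; apply: cvg_pair; [exact: cvg_id | exact: cvg_cst]. Qed.

Lemma continuous_section_fst {U V W : topologicalType} (g : U * V -> W) (y : V) :
  continuous g -> continuous (fun x => g (x, y)).
Proof. by move=> cg x; exact: (continuous_comp (continuous_pair_l y x) (cg _)). Qed.

Lemma diff_section_snd (R : numFieldType) (U V W : normedModType R)
    (f : U * V -> W) (x : U) (y v : V) :
  differentiable f (x, y) ->
  'd (fun z => f (x, z)) y v = 'd f (x, y) (0, v).
Proof.
move=> df.
have -> : (fun z => f (x, z)) = f \o (fun z : V => (cst x z, id z)) by [].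
have pair_diff : differentiable (fun z : V => (cst x z, id z)) y.
  exact: differentiable_pair.
rewrite diff_comp //= diff_pair //= diff_cst.
by rewrite (@diff_val _ _ _ _ _ _ _ (is_diff_id y)).
Qed.

Lemma dotr_grad (R : realType) (n : nat) (g : 'rV[R]_n -> R) (x D : 'rV[R]_n) :
  dotr D (grad g x) = 'd g x D.
Proof.
rewrite /dotr [in RHS](row_sum_delta D) linear_sum /=.
by apply: eq_bigr => l _; rewrite linearZ mxE.
Qed.

Lemma continuous_max_margin (R : realType) (u w : R -> R) (a b : R) :
  continuous u -> continuous w ->
  (forall t, a <= t <= b -> 0 < u t \/ 0 < w t) ->
  exists2 e, 0 < e & forall t, a <= t <= b -> e < u t \/ e < w t.
Proof.
move=> cu cw uw_pos.
have [ba|ab] := ltP b a.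
  exists 1 => // t /andP[a_le le_b].
  by have := le_lt_trans (le_trans a_le le_b) ba; rewrite ltxx.
have cuw : {within `[a, b], continuous (u \max w)}.
  by apply: continuous_subspaceT => t; exact: (@continuous_max R R _ _ t (cu t) (cw t)).
have [c c_ab c_min] := EVT_min ab cuw.
have m_gt0 : 0 < (u \max w) c.
  rewrite /= lt_max; move: c_ab; rewrite in_itv /= => /uw_pos.
  by case=> ->; rewrite ?orbT.
exists ((u \max w) c / 2) => [|t t_ab]; first by rewrite divr_gt0.
move: m_gt0 (c_min t); rewrite /= in_itv /= t_ab => m_gt0 /(_ isT).
by rewrite le_max => /orP[] h; [left | right]; lra.
Qed.

Lemma finite_uniform_margin (R : realType) (X : finType) (P : X -> R -> Prop) :
  (forall x e e', 0 < e' -> e' <= e -> P x e -> P x e') ->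
  (forall x, exists2 e, 0 < e & P x e) -> exists2 e, 0 < e & forall x, P x e.
Proof.
move=> P_down P_ex.
have /choice[m m_spec] : forall x, exists e, 0 < e /\ P x e.
  by move=> x; have [e] := P_ex x; exists e.
have m_gt0 : 0 < \big[Num.min/1]_x m x.
  by apply: lt_bigmin => // x _; exact: (m_spec x).1.
exists (\big[Num.min/1]_x m x) => // x.
by apply: (P_down x (m x)) => //; [exact: bigmin_le | exact: (m_spec x).2].
Qed.

Theorem lemma9 (R : realType) (n : nat) (I J K : finType)
  (b : I -> J -> R -> 'rV[R]_n -> set 'rV[R]_3) (o : K -> set 'rV[R]_3)
  (T d0 : R) (theta0 D : 'rV[R]_n) (eps9 : R) :
  0 <= d0 ->
  (* Assumption 1 *)
  (forall i j k, C1 (fun p : R * 'rV[R]_n => setdist (b i j p.1 p.2) (o k))) ->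
  (* theta0 is feasible *)
  (forall i j k t, 0 <= t <= T -> d0 <= setdist (b i j t theta0) (o k)) ->
  0 < eps9 ->
  (forall i j k t, 0 <= t <= T -> setdist (b i j t theta0) (o k) = d0 ->
     dotr D (grad (fun th => setdist (b i j t th) (o k)) theta0) > eps9) ->
  exists eps12 : R, 0 < eps12 /\
    forall i j k t, 0 <= t <= T ->
      setdist (b i j t theta0) (o k) - d0 > eps12 \/
      (setdist (b i j t theta0) (o k) - d0 <= eps12 /\
       dotr D (grad (fun th => setdist (b i j t th) (o k)) theta0) >= eps9 / 2).
Proof.
move=> _ C1_dist feas eps9_gt0 active_grad.
pose f (x : I * J * K) (p : R * 'rV[R]_n) := setdist (b x.1.1 x.1.2 p.1 p.2) (o x.2).
have dotr_gradE x t :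
    dotr D (grad (fun th => f x (t, th)) theta0) = 'd (f x) (t, theta0) (0, D).
  by rewrite dotr_grad diff_section_snd //; case: x => [[i j] k]; exact: (C1_dist i j k).1.
have [e e_gt0 e_margin] : exists2 e, 0 < e & forall x t, 0 <= t <= T ->
    e < f x (t, theta0) - d0 \/ e < 'd (f x) (t, theta0) (0, D) - eps9 / 2.
  apply: finite_uniform_margin => [x e e' _ e'_le e_margin t /e_margin|[[i j] k]].
    by case=> h; [left | right]; exact: le_lt_trans h.
  have [f_diff df_cont] := C1_dist i j k.
  apply: continuous_max_margin => [t | t | t t_T].
  - have f_cont : continuous (f (i, j, k)).
      by move=> p; exact: differentiable_continuous (f_diff p).
    exact: continuousB (continuous_section_fst _ theta0 f_cont t)
                       (@cst_continuous _ _ d0 t).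
  - exact: continuousB (continuous_section_fst _ theta0 (df_cont (0, D)) t)
                       (@cst_continuous _ _ (eps9 / 2) t).
  - have /= := feas i j k t t_T; rewrite le_eqVlt => /predU1P[d0E | d0_lt].
      by right; have := active_grad i j k t t_T (esym d0E); rewrite -dotr_gradE /=; lra.
    by left; rewrite subr_gt0.
exists e; split=> // i j k t t_T.
have [dist_gt | dist_le] := ltP e (setdist (b i j t theta0) (o k) - d0); [by left | right].
split=> //; have := dotr_gradE (i, j, k) t; rewrite /= => ->.
by case: (e_margin (i, j, k) t t_T) => /= h; lra.
Qed.
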